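(* Let $(\mathcal Y,\mu)$ be a measure space and $p,q\ge0$ $\mu$-integrable functions on $\mathcal Y$. Then $$\sup_{\phi,\psi}\Big\{\int_{\mathcal Y}(p\phi-q\psi)\,d\mu:\ 0\le\phi\le\psi\le2,\ \sup\phi\le1+\inf\psi\Big\}=\int(p-q)_+\,d\mu+\Big(\int(p-q)\,d\mu\Big)_+,$$ where the supremum is over measurable $\phi,\psi:\mathcal Y\to\mathbb R$ and $(x)_+=\max\{x,0\}$. *)

From HB Require Import structures.
From mathcomp Require Import all_boot all_order all_algebra.
From mathcomp Require Import all_classical all_reals all_analysis.
Set Implicit Arguments. Unset Strict Implicit. Unset Printing Implicit Defensive.

From HB Require Import structures.
From mathcomp Require Import all_boot all_order all_algebra.
From mathcomp Require Import all_classical all_reals all_analysis.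
From mathcomp Require Import measurable_realfun lra.

Set Implicit Arguments.
Unset Strict Implicit.
Unset Printing Implicit Defensive.

Import Order.TTheory GRing.Theory Num.Theory.
Local Open Scope classical_set_scope.
Local Open Scope ring_scope.

(* Put f = p - q.  An admissible pair admits a constant m in [0, 1] with
   sup phi <= 1 + m <= 1 + inf psi, and then pointwise
   p phi - q psi <= f_+ + m f (split on the sign of f); integrating bounds the
   value by int f_+ + m int f <= int f_+ + (int f)_+.  Conversely
   phi = psi = c + [f >= 0] has value int f_+ + c int f, and c = 0 or c = 1
   attains the bound. *)

Lemma mul_diff_le_pos_part (R : realDomainType) (p q phi psi m : R) :
  0 <= p -> 0 <= q -> 0 <= phi -> phi <= psi -> phi <= 1 + m -> m <= psi ->
  p * phi - q * psi <= Num.max (p - q) 0 + m * (p - q).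
Proof.
move=> p0 q0 phi0 phi_psi phi_m m_psi.
by rewrite /Num.Def.maxr; case: ltrP; nra.
Qed.

Lemma mule_le_maxe0 (R : realDomainType) (c : R) (b : \bar R) :
  0 <= c <= 1 -> (c%:E * b <= maxe b 0)%E.
Proof.
move=> /andP[c0 c1]; have [b0|] := leP b 0%E.
- exact: mule_ge0_le0.
- case: b => [r||] //= r0.
  + by rewrite -EFinM lee_fin ler_piMl // ltW.
  + by rewrite leey.
Qed.

Lemma maxe0_mule01 (R : realDomainType) (b : \bar R) :
  exists2 c : R, 0 <= c <= 1 & maxe b 0 = (c%:E * b)%E.
Proof.
have [b0|b0] := leP b 0%E.
- by exists 0; [rewrite lexx ler01 | rewrite mul0e].
- by exists 1; [rewrite ler01 lexx | rewrite mul1e].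
Qed.

Lemma separating_constant (T : Type) (R : realType) (phi psi : T -> R) :
  (forall x, 0 <= psi x) -> (forall x, phi x <= 2) ->
  (forall x y, phi x <= 1 + psi y) ->
  exists m, [/\ 0 <= m, m <= 1, forall x, phi x <= 1 + m & forall y, m <= psi y].
Proof.
move=> psi0 phi2 phi_psi.
pose E := range psi `|` [set 1].
have E1 : E 1 by right.
have E_lb0 : lbound E 0 by move=> _ [[y _ <-]|->].
have E_lbphi x : lbound E (phi x - 1).
  by move=> _ [[y _ <-]|->]; [have := phi_psi x y | have := phi2 x]; lra.
exists (inf E); split.
- by apply: lb_le_inf => //; exists 1.
- by apply: ge_inf => //; exists 0.
- by move=> x; rewrite -lerBlDl; apply: lb_le_inf => //; exists 1.
- by move=> y; apply: ge_inf; [exists 0 | left; exists y].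
Qed.

Section dual_formula.
Context d (T : measurableType d) (R : realType) (mu : {measure set T -> \bar R}).
Variables p q : T -> R.
Hypotheses (p_ge0 : forall x, 0 <= p x) (q_ge0 : forall x, 0 <= q x).
Hypotheses (p_int : mu.-integrable setT (EFin \o p))
           (q_int : mu.-integrable setT (EFin \o q)).

Definition dual_values : set (\bar R) :=
  [set r | exists phi psi : T -> R,
    [/\ measurable_fun setT phi, measurable_fun setT psi,
        (forall x, 0 <= phi x /\ phi x <= psi x /\ psi x <= 2),
        (forall x y, phi x <= 1 + psi y) &
        r = (\int[mu]_x ((p x * phi x - q x * psi x)%:E))%E]].

Let f x := p x - q x.

Let mp : measurable_fun setT p.
Proof. by apply/measurable_EFinP; exact: measurable_int p_int. Qed.

Let mq : measurable_fun setT q.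
Proof. by apply/measurable_EFinP; exact: measurable_int q_int. Qed.

Let mf : measurable_fun setT f.
Proof. exact: measurable_funB. Qed.

Lemma integrable_dominated_pq (h : T -> R) : measurable_fun setT h ->
  (forall x, `|h x| <= 2 * (p x + q x)) -> mu.-integrable setT (EFin \o h).
Proof.
move=> mh h_le; have pq2_int : mu.-integrable setT (EFin \o (fun x => 2 * (p x + q x))).
  apply: (eq_integrable _ (fun x => 2%:E * ((p x)%:E + (q x)%:E))%E) => //.
  by apply: integrableZl; have := integrableD measurableT p_int q_int.
apply: le_integrable pq2_int => //; first exact/measurable_EFinP.
move=> x _ /=; rewrite lee_fin (le_trans (h_le x)) // ger0_norm //.
by have := p_ge0 x; have := q_ge0 x; lra.
Qed.

Let norm_pos_part_le x : `|Num.max (f x) 0| <= `|f x|.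
Proof. by rewrite /Num.Def.maxr; case: ltrP; rewrite ?normr0. Qed.

Let norm_f_le x : `|f x| <= p x + q x.
Proof.
by rewrite /f; have := p_ge0 x; have := q_ge0 x; case: (ler0P (p x - q x)); lra.
Qed.

Let f_int : mu.-integrable setT (EFin \o f).
Proof.
apply: integrable_dominated_pq => // x.
by have := norm_f_le x; have := p_ge0 x; have := q_ge0 x; lra.
Qed.

Let fpos_int : mu.-integrable setT (EFin \o (fun x => Num.max (f x) 0)).
Proof.
apply: integrable_dominated_pq; first exact: measurable_maxr.
move=> x; have := norm_pos_part_le x; have := norm_f_le x.
by have := p_ge0 x; have := q_ge0 x; lra.
Qed.

Lemma integral_pos_part_affine (c : R) :
  (\int[mu]_x ((Num.max (f x) 0 + c * f x)%:E) =
   \int[mu]_x ((Num.max (f x) 0)%:E) + c%:E * \int[mu]_x ((f x)%:E))%E.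
Proof.
rewrite -integralZl //; under eq_integral do rewrite EFinD EFinM.
by rewrite integralD //; exact: integrableZl.
Qed.

Lemma dual_values_le_bound r : dual_values r ->
  (r <= \int[mu]_x ((Num.max (f x) 0)%:E) + maxe (\int[mu]_x ((f x)%:E)) 0)%E.
Proof.
move=> [phi [psi [mphi mpsi bnd phi_psi ->]]].
have [m [m0 m1 phi_m m_psi]] : exists m, [/\ 0 <= m, m <= 1,
    forall x, phi x <= 1 + m & forall y, m <= psi y].
  by apply: separating_constant phi_psi => x; have [? [? ?]] := bnd x; lra.
apply: (@le_trans _ _ (\int[mu]_x ((Num.max (f x) 0 + m * f x)%:E))%E).
  apply: le_integral => //.
  - apply: integrable_dominated_pq.
      by apply: measurable_funB; exact: measurable_funM.
    move=> x; have [? [? ?]] := bnd x; have := p_ge0 x; have := q_ge0 x.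
    move=> q0 p0; rewrite (le_trans (ler_normB _ _)) // !normrM !ger0_norm //;
      [nra | lra].
  - apply: integrable_dominated_pq.
      by apply: measurable_funD; [exact: measurable_maxr | exact: measurable_funM].
    move=> x; have := norm_f_le x; have := p_ge0 x; have := q_ge0 x.
    move=> q0 p0 fle; rewrite (le_trans (ler_normD _ _)) // normrM ger0_norm //.
    have := norm_pos_part_le x; nra.
  - move=> x _; rewrite lee_fin; have [? [? _]] := bnd x.
    exact: mul_diff_le_pos_part.
rewrite integral_pos_part_affine leeD2l //; apply: mule_le_maxe0.
by rewrite m0 m1.
Qed.

Lemma dual_values_pos_part_affine (c : R) : 0 <= c <= 1 ->
  dual_values (\int[mu]_x ((Num.max (f x) 0)%:E) + c%:E * \int[mu]_x ((f x)%:E))%E.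
Proof.
move=> /andP[c0 c1]; pose psi x := if 0 <= f x then 1 + c else c.
have mpsi : measurable_fun setT psi.
  by apply: measurable_fun_ifT => //; exact: measurable_fun_ler.
exists psi, psi; split => //.
- by move=> x; rewrite /psi; case: ifP; lra.
- by move=> x y; rewrite /psi; case: ifP; case: ifP; lra.
- rewrite -integral_pos_part_affine; apply: eq_integral => x _; congr EFin.
  rewrite /psi /Num.Def.maxr -/(f x).
  by case: (ltrP (f x) 0); rewrite /f; nra.
Qed.

End dual_formula.

Theorem lemma2 (d : measure_display) (T : measurableType d) (R : realType)
  (mu : {measure set T -> \bar R}) (p q : T -> R)
  (p_ge0 : forall x, 0 <= p x) (q_ge0 : forall x, 0 <= q x)
  (p_int : mu.-integrable setT (EFin \o p))
  (q_int : mu.-integrable setT (EFin \o q)) :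
  ereal_sup [set r : \bar R | exists phi psi : T -> R,
      [/\ measurable_fun setT phi, measurable_fun setT psi,
          (forall x, 0 <= phi x /\ phi x <= psi x /\ psi x <= 2),
          (forall x y, phi x <= 1 + psi y) &
          r = (\int[mu]_x ((p x * phi x - q x * psi x)%:E))%E]]
  = (\int[mu]_x ((Num.max (p x - q x) 0)%:E)
     + Order.max (\int[mu]_x ((p x - q x)%:E)) 0)%E.
Proof.
apply/le_anti/andP; split.
- apply: ge_ereal_sup => r.
  exact: (dual_values_le_bound p_ge0 q_ge0 p_int q_int).
- have [c c01 ->] := maxe0_mule01 (\int[mu]_x ((p x - q x)%:E))%E.
  apply: ereal_sup_ubound.
  exact: (dual_values_pos_part_affine p_ge0 q_ge0 p_int q_int c01).
Qed.
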